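(* Let $\tau$ be a uniformly random permutation of $\{1,\dots,n\}$ and let $S_n$ be the number of steps of the greedy walk from $1$ to $n$ in $G_n$ (as in the context). For every $\varepsilon>0$, \[ \mathbb{P}\bigl((2-\varepsilon)\log n\le S_n\le(2+\varepsilon)\log n\bigr)\to1\quad\text{as } n\to\infty, \] where $\log$ is the natural logarithm.
   Context: Vertices $V=\{1,\dots,n\}\subset\mathbb{Z}$. A permutation $\tau$ of $V$ gives insertion times: vertex $x$ is inserted at time $\tau(x)$. The undirected graph $G_n$ on $V$ is built as follows: start with no edges; for $t=1,\dots,n$, let $x$ be the vertex with $\tau(x)=t$; if some $y<x$ with $\tau(y)<t$ exists, add an edge between $x$ and the largest such $y$; if some $y>x$ with $\tau(y)<t$ exists, add an edge between $x$ and the smallest such $y$. The greedy walk toward target $n$ starts at $x_0=1$ and, from the current vertex $x\ne n$, moves to the neighbor $y$ of $x$ minimizing $|y-n|$, stopping at $n$; $S_n$ is its number of moves. *)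

From HB Require Import structures.
From mathcomp Require Import all_boot all_order all_algebra all_fingroup.
From mathcomp Require Import all_classical all_reals all_analysis.
Set Implicit Arguments. Unset Strict Implicit. Unset Printing Implicit Defensive.
Import Order.TTheory GRing.Theory Num.Theory.

(* Vertices 1..n are represented 0-based by 'I_n (vertex i+1 <-> ordinal i).
   A permutation s : 'S_n gives insertion times: vertex x inserted at time s x
   (0-based). *)

Definition lower_link n (s : 'S_n) (x y : 'I_n) : bool :=
  [&& (y < x)%N, (s y < s x)%N &
      [forall z : 'I_n, ((y < z)%N && (z < x)%N) ==> ~~ (s z < s x)%N]].

Definition upper_link n (s : 'S_n) (x y : 'I_n) : bool :=
  [&& (x < y)%N, (s y < s x)%N &
      [forall z : 'I_n, ((x < z)%N && (z < y)%N) ==> ~~ (s z < s x)%N]].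

(* undirected adjacency in G_n: the edge {x,y} is added when the later of the
   two is inserted and the earlier one is its lower/upper link *)
Definition adj n (s : 'S_n) (x y : 'I_n) : bool :=
  [|| lower_link s x y, upper_link s x y, lower_link s y x | upper_link s y x].

Definition adjn n (s : 'S_n) (a b : nat) : bool :=
  [exists x : 'I_n, exists y : 'I_n,
     [&& (x == a :> nat), (y == b :> nat) & adj s x y]].

(* greedy step toward the target n.-1 (= vertex n): the neighbour y minimising
   |y - target| = target - y, i.e. the largest neighbour *)
Definition greedy_next n (s : 'S_n) (a : nat) : nat :=
  \max_(y < n | adjn s a y) (y : nat).

Fixpoint walk_steps n (s : 'S_n) (fuel a : nat) : nat :=
  if a == n.-1 then 0%N else
  match fuel with
  | 0 => 0%N
  | f.+1 => (walk_steps s f (greedy_next s a)).+1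
  end.

(* S_n : greedy walk from vertex 1 (label 0) to vertex n (label n-1);
   the walk strictly increases so n steps of fuel suffice *)
Definition greedy_steps n (s : 'S_n) : nat := walk_steps s n 0.

Definition prob_window (R : realType) (eps : R) (n : nat) : R :=
  (#|[set s : 'S_n | ((2 - eps) * ln (n%:R : R) <= (greedy_steps s)%:R)%R
                     && ((greedy_steps s)%:R <= (2 + eps) * ln (n%:R : R))%R]|%:R
   / #|[set: 'S_n]|%:R)%R.

From HB Require Import structures.
From mathcomp Require Import all_boot all_order all_algebra all_fingroup.
From mathcomp Require Import all_classical all_reals all_analysis.
From mathcomp Require Import zify ring lra.
Import Order.TTheory GRing.Theory Num.Theory numFieldNormedType.Exports.
Set Implicit Arguments. Unset Strict Implicit. Unset Printing Implicit Defensive.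

(* Write s for the insertion-time permutation and call i a left-to-right
   (right-to-left) minimum if s i < s k for all k < i (all k > i).  From a
   vertex a the greedy walk jumps to its largest neighbour b, and this lowers
   by exactly one the potential "number of left-to-right minima of s restricted
   to [a, n) + number of right-to-left minima in [a, n)", which equals 2 at the
   target.  Hence S_n + 2 = L + R, the numbers of left-to-right and
   right-to-left minima; R has the law of L (reverse the positions).
   For uniform s, swapping positions inside [0, i] shows that "i is a
   left-to-right minimum" has probability 1/(i+1) and that these events are
   pairwise independent, so L has mean H_n = log n + O(1) and variance at
   most H_n.
   Chebyshev's inequality then bounds the probability of leaving the window by
   O(1 / (eps^2 log n)). *)

Lemma ltn_ord_neq n (i j : 'I_n) : (i <= j)%N -> j != i -> (i < j)%N.
Proof. by move=> ij; rewrite ltn_neqAle ij andbT eq_sym (inj_eq val_inj). Qed.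

Section GreedyWalk.
Variables (n : nat) (s : 'S_n).

Lemma eqn_perm (x y : 'I_n) : (s x == s y :> nat) = (x == y).
Proof. by apply/eqP/eqP => [/val_inj/perm_inj|->]. Qed.

Lemma adj_ltP (x y : 'I_n) : (x < y)%N ->
  adj s x y <-> (forall z : 'I_n, (x < z < y)%N -> (maxn (s x) (s y) < s z)%N).
Proof.
move=> xy; rewrite /adj /lower_link /upper_link.
have -> : (y < x)%N = false by lia.
rewrite xy /= orbF.
have sxy : s x != s y :> nat by rewrite eqn_perm; apply/eqP => e; rewrite e ltnn in xy.
split.
- move=> + z /andP [xz zy].
  have sxz : s x != s z :> nat by rewrite eqn_perm; apply/eqP => e; rewrite e ltnn in xz.
  have syz : s y != s z :> nat by rewrite eqn_perm; apply/eqP => e; rewrite e ltnn in zy.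
  by case/orP => /andP [? /forall_inP/(_ z)]; rewrite xz zy -leqNgt => /(_ isT); lia.
- move=> between; case: (ltngtP (s x) (s y)) => c; last by rewrite c eqxx in sxy.
  + apply/orP; right; apply/andP; split => //; apply/forall_inP => z /between; lia.
  + apply/orP; left; apply/andP; split => //; apply/forall_inP => z /between; lia.
Qed.

Lemma adjnE (a y : 'I_n) : adjn s a y = adj s a y.
Proof.
apply/existsP/idP => [[x /existsP [z /and3P [/eqP/val_inj -> /eqP/val_inj ->]]]//|axy].
by exists a; apply/existsP; exists y; rewrite !eqxx.
Qed.

Lemma greedy_nextP (a : 'I_n) : (a.+1 < n)%N ->
  exists2 b : 'I_n, greedy_next s a = b &
    [/\ (a < b)%N, adj s a b & forall y : 'I_n, (b < y)%N -> ~~ adj s a y].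
Proof.
move=> an; pose A := [pred y : 'I_n | adjn s a y].
have a_succ : adj s a (Ordinal an) by apply/adj_ltP => //= z; lia.
have : (0 < #|A|)%N by apply/card_gt0P; exists (Ordinal an); rewrite inE adjnE.
case/(eq_bigmax_cond (fun y : 'I_n => val y)) => b bA bE.
have le_b y : adj s a y -> (y <= b)%N.
  by rewrite -adjnE => Ay; rewrite -bE (@leq_bigmax_cond _ A (fun y => val y)).
exists b => //; split; first by have := le_b _ a_succ.
- by rewrite -adjnE.
- by move=> y yb; apply/negP => /le_b; lia.
Qed.

Definition lrmin_from (a : nat) := [set i : 'I_n | (a <= i)%N &&
  [forall k : 'I_n, (a <= k < i)%N ==> (s i < s k)%N]].
Definition rlmin_from (a : nat) := [set i : 'I_n | (a <= i)%N &&
  [forall k : 'I_n, (i < k)%N ==> (s i < s k)%N]].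
Definition potential (a : nat) := (#|lrmin_from a| + #|rlmin_from a|)%N.

Lemma lrmin_from_single (x : 'I_n) :
  (forall z : 'I_n, (x < z)%N -> (s x < s z)%N) -> lrmin_from x = [set x].
Proof.
move=> x_min; apply/setP => i; rewrite !inE; apply/idP/eqP => [|->].
- case/andP => xi /forall_inP i_rec; apply/eqP; apply: contraT => ix.
  have xi' := ltn_ord_neq xi ix.
  by have := i_rec x; rewrite leqnn xi' => /(_ isT); have := x_min i xi'; lia.
- by rewrite leqnn; apply/forall_inP; lia.
Qed.

Section GreedyStep.
Variables a b : 'I_n.
Hypotheses (ab : (a < b)%N)
  (between : forall z : 'I_n, (a < z < b)%N -> (maxn (s a) (s b) < s z)%N)
  (b_max : forall y : 'I_n, (b < y)%N -> ~~ adj s a y).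

Lemma lrmin_from_descent : (s b < s a)%N -> lrmin_from a = a |: lrmin_from b.
Proof.
move=> ba; apply/setP => i; rewrite !inE; apply/idP/idP.
- case/andP => ai /forall_inP i_rec; case: (eqVneq i a) => //= ia.
  have ai' := ltn_ord_neq ai ia.
  case: (ltnP i b) => bi /=.
    by have := @between i; have := i_rec a; rewrite leqnn ai' bi => /(_ isT) + /(_ isT); lia.
  by apply/forall_inP => k /andP [bk ki]; apply: i_rec; lia.
- case/orP => [/eqP ->|/andP [bi /forall_inP i_rec]].
    by rewrite leqnn; apply/forall_inP; lia.
  have sib : (s i <= s b)%N.
    case: (eqVneq i b) => [->//|ib].
    by have := i_rec b; rewrite leqnn (ltn_ord_neq bi ib) => /(_ isT); lia.
  rewrite (leq_trans (ltnW ab) bi); apply/forall_inP => k /andP [ak ki].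
  case: (leqP b k) => bk; first by apply: i_rec; rewrite bk.
  case: (eqVneq k a) => [->|ka]; first by lia.
  by have := @between k; rewrite (ltn_ord_neq ak ka) bk => /(_ isT); lia.
Qed.

Lemma rlmin_from_descent : (s b < s a)%N -> rlmin_from a = rlmin_from b.
Proof.
move=> ba; apply/setP => i; rewrite !inE; apply/idP/idP.
- case/andP => ai /forall_inP i_rec.
  case: (ltnP i b) => bi; last by apply/forall_inP.
  have := i_rec b bi; case: (eqVneq i a) => [->|ia]; first by lia.
  by have := @between i; rewrite (ltn_ord_neq ai ia) bi => /(_ isT); lia.
- by case/andP => bi ->; rewrite andbT; lia.
Qed.

(* A vertex y > b with s y < s b, chosen leftmost, would be a neighbour of a
   beyond b. *)
Lemma ascent_min_beyond : (s a < s b)%N ->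
  forall y : 'I_n, (b < y)%N -> (s b < s y)%N.
Proof.
move=> ab' y0 by0; case: (ltngtP (s b) (s y0)) => // [sy0 | /val_inj/perm_inj e]; last first.
  by rewrite e ltnn in by0.
pose P := [pred y : 'I_n | (b < y)%N && (s y < s b)%N].
have Py0 : P y0 by rewrite inE by0.
case: (arg_minnP (fun y : 'I_n => val y) Py0) => y /andP [by_ syb] y_first.
rewrite -(negbTE (b_max by_)); apply/adj_ltP => [|z /andP [az zy]]; first lia.
have szb : (s b <= s z)%N.
  case: (ltngtP z b) => [zb | bz | /val_inj ->]; last exact: leqnn.
  - by have := @between z; rewrite az zb => /(_ isT); lia.
  - rewrite leqNgt; apply/negP => szb.
    by have := y_first z; rewrite inE bz szb => /(_ isT) /=; lia.
lia.
Qed.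

Lemma ascent_min_from : (s a < s b)%N ->
  forall z : 'I_n, (a < z)%N -> (s a < s z)%N.
Proof.
move=> ab' z az; case: (ltngtP z b) => [zb | bz | /val_inj ->] //.
- by have := @between z; rewrite az zb => /(_ isT); lia.
- by have := ascent_min_beyond ab' bz; lia.
Qed.

Lemma rlmin_from_ascent : (s a < s b)%N -> rlmin_from a = a |: rlmin_from b.
Proof.
move=> ab'; apply/setP => i; rewrite !inE; apply/idP/idP.
- case/andP => ai /forall_inP i_rec; case: (eqVneq i a) => //= ia.
  case: (ltnP i b) => bi; last by apply/forall_inP.
  have := i_rec b bi; have := @between i.
  by rewrite (ltn_ord_neq ai ia) bi => /(_ isT); lia.
- case/orP => [/eqP ->|/andP [bi ->]]; last by rewrite andbT; lia.
  by rewrite leqnn; apply/forall_inP => k; apply: ascent_min_from.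
Qed.

Lemma potential_step : (potential b).+1 = potential a.
Proof.
have a_notin_from_b (P : pred 'I_n) : a \notin [set i : 'I_n | (b <= i)%N && P i].
  by rewrite inE leqNgt ab.
rewrite /potential; case: (ltngtP (s b) (s a)) => [ba | ab' | /val_inj/perm_inj e].
- by rewrite lrmin_from_descent // rlmin_from_descent // cardsU1 a_notin_from_b.
- rewrite (lrmin_from_single (ascent_min_from ab')).
  rewrite (lrmin_from_single (ascent_min_beyond ab')) !cards1.
  by rewrite rlmin_from_ascent // cardsU1 a_notin_from_b.
- by move: ab; rewrite e ltnn.
Qed.
End GreedyStep.

Lemma potential_greedy_next (a : 'I_n) : (a.+1 < n)%N ->
  (potential (greedy_next s a)).+1 = potential a.
Proof.
move=> an; have [b -> [ab adj_ab b_max]] := greedy_nextP an.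
by apply: potential_step => //; apply/adj_ltP.
Qed.

Lemma potential_ge2 (a : 'I_n) : (2 <= potential a)%N.
Proof.
have last_n : (n.-1 < n)%N by have := ltn_ord a; lia.
have lr_a : (0 < #|lrmin_from a|)%N.
  by apply/card_gt0P; exists a; rewrite inE leqnn; apply/forall_inP; lia.
have rl_a : (0 < #|rlmin_from a|)%N.
  apply/card_gt0P; exists (Ordinal last_n); rewrite inE /=.
  apply/andP; split; first by have := ltn_ord a; lia.
  by apply/forall_inP => k /=; have := ltn_ord k; lia.
by rewrite /potential; lia.
Qed.

Lemma potential_last (a : 'I_n) : a = n.-1 :> nat -> potential a = 2.
Proof.
move=> a_last; have a_max (z : 'I_n) : (a < z)%N = false.
  by apply/negbTE; have := ltn_ord z; lia.
have rl_a : rlmin_from a = [set a].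
  apply/setP => i; rewrite !inE; apply/idP/eqP => [/andP [ai _]|->].
    by apply/val_inj => /=; have := ltn_ord i; lia.
  by rewrite leqnn; apply/forall_inP => k; rewrite a_max.
by rewrite /potential rl_a lrmin_from_single ?cards1 // => z; rewrite a_max.
Qed.

Lemma walk_steps_potential f (a : 'I_n) : (n.-1 - a <= f)%N ->
  walk_steps s f a = (potential a).-2.
Proof.
elim: f a => [|f IH] a fuel /=.
  have a_last : a = n.-1 :> nat by have := ltn_ord a; lia.
  by rewrite (potential_last a_last) a_last eqxx.
case: eqP => [/potential_last -> // | a_last].
have an : (a.+1 < n)%N by have := ltn_ord a; lia.
have [b gb [ab _ _]] := greedy_nextP an.
rewrite -(potential_greedy_next an) gb IH; last by lia.
by have := potential_ge2 b; case: (potential b) => [|[|k]].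
Qed.
End GreedyWalk.

Lemma card_sum_mem (T : finType) (A : {pred T}) : #|A| = (\sum_x (x \in A))%N.
Proof. by rewrite -sum1_card big_mkcond; apply: eq_bigr => x _; case: (x \in A). Qed.

Definition lrmin n (s : 'S_n) (i : 'I_n) : bool :=
  [forall k : 'I_n, (k < i)%N ==> (s i < s k)%N].
Definition lrmin_count n (s : 'S_n) : nat := \sum_(i < n) lrmin s i.
Definition rev_perm n : 'S_n := perm (@rev_ord_inj n).

Lemma lrmin_rev_perm n (s : 'S_n) (i : 'I_n) :
  lrmin (rev_perm n * s)%g (rev_ord i) = [forall k : 'I_n, (i < k)%N ==> (s i < s k)%N].
Proof.
have revP (x : 'I_n) : (rev_perm n * s)%g x = s (rev_ord x) by rewrite permM permE.
apply/forallP/forallP => rec k; apply/implyP => lt_k; have := implyP (rec (rev_ord k));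
  rewrite !revP !rev_ordK; apply => /=; move: (ltn_ord k) (ltn_ord i) lt_k; rewrite /=; lia.
Qed.

Lemma greedy_steps_lrmin n (s : 'S_n) : (0 < n)%N ->
  (greedy_steps s + 2 = lrmin_count s + lrmin_count (rev_perm n * s)%g)%N.
Proof.
move=> n0; rewrite /greedy_steps -[0%N]/(Ordinal n0 : nat) walk_steps_potential /=; last by lia.
have <- : potential s 0 = (lrmin_count s + lrmin_count (rev_perm n * s)%g)%N.
  rewrite /potential !card_sum_mem /lrmin_count.
  by congr (_ + _); [|rewrite [RHS](reindex_inj rev_ord_inj)];
    apply: eq_bigr => i _; rewrite ?lrmin_rev_perm inE.
have : (2 <= potential s 0)%N by exact: potential_ge2 s (Ordinal n0).
by case: (potential s 0) => [|[|k]] // _; rewrite addn2.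
Qed.

Section MinAtSymmetry.
Variables (n : nat) (W : {set 'I_n}).

Definition min_at (s : 'S_n) (x : 'I_n) := [forall k in W, (k != x) ==> (s x < s k)%N].

Lemma min_at_tperm x y s : x \in W -> y \in W -> min_at s y -> min_at (tperm x y * s)%g x.
Proof.
move=> xW yW /forall_inP y_min; apply/forall_inP => k kW; apply/implyP => kx.
rewrite !permM tpermL; apply: (implyP (y_min _ _)); first by case: tpermP.
by rewrite -{2}(tpermL x y) (inj_eq perm_inj).
Qed.

Lemma sum_min_at s i : i \in W -> (\sum_(x in W) min_at s x)%N = 1.
Proof.
move=> iW; pose m := [arg min_(x < i in W) (s x : nat)].
have mW : m \in W by rewrite /m; case: arg_minnP.
have min_atE x : x \in W -> min_at s x = (x == m).
  rewrite /m; case: arg_minnP => // y yW y_min xW; apply/idP/eqP => [/forall_inP x_min|->].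
    apply/eqP/contraT; rewrite eq_sym => yx.
    by have := y_min x xW; have := implyP (x_min y yW) yx; lia.
  apply/forall_inP => k kW; apply/implyP => ky.
  by rewrite ltn_neqAle y_min // andbT eqn_perm eq_sym.
rewrite (bigD1 m) //= min_atE // eqxx big1 // => x /andP [xW xm].
by rewrite min_atE // (negbTE xm).
Qed.

Variable Q : pred 'S_n.
Hypothesis Q_tperm : forall x y s, x \in W -> y \in W -> Q s -> Q (tperm x y * s)%g.

Lemma card_min_at_le x y : x \in W -> y \in W ->
  (#|[set s | Q s && min_at s x]| <= #|[set s | Q s && min_at s y]|)%N.
Proof.
move=> xW yW; rewrite -(card_imset _ (mulgI (tperm y x))); apply: subset_leq_card.
by apply/fintype.subsetP => _ /imsetP [s + ->]; rewrite !inE => /andP [Qs xs];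
  rewrite Q_tperm // min_at_tperm.
Qed.

(* The transpositions of W act transitively on the possible positions of the
   minimum, so each of the #|W| positions carries the same share of Q. *)
Lemma card_min_at i : i \in W ->
  (#|[set s | Q s && min_at s i]| * #|W|)%N = #|[set s | Q s]|.
Proof.
move=> iW; have eq_i x : x \in W -> #|[set s | Q s && min_at s x]| = #|[set s | Q s && min_at s i]|.
  by move=> xW; apply/eqP; rewrite eqn_leq !card_min_at_le.
rewrite mulnC -sum_nat_const -(eq_bigr _ eq_i) /= card_sum_mem.
under eq_bigr => x _ do rewrite card_sum_mem.
rewrite exchange_big /=; apply: eq_bigr => s _.
under eq_bigr => x _ do rewrite inE.
rewrite inE; case: (Q s).
- exact: (sum_min_at s iW).
- exact: big1.
Qed.
End MinAtSymmetry.

Lemma card_ord_le n (i : 'I_n) : #|[set k : 'I_n | (k <= i)%N]| = i.+1.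
Proof.
rewrite -sum1dep_card -(big_ord_widen _ (fun=> 1%N) (ltn_ord i)).
by rewrite sum_nat_const card_ord muln1.
Qed.

Lemma min_at_lrmin n (s : 'S_n) (i : 'I_n) : min_at [set k : 'I_n | (k <= i)%N] s i = lrmin s i.
Proof.
apply/forall_inP/forallP => i_min k.
- apply/implyP => ki; apply: (implyP (i_min k _)); first by rewrite inE ltnW.
  by apply/eqP => e; rewrite e ltnn in ki.
- rewrite inE => ki; apply/implyP => k_ne_i; rewrite eq_sym in k_ne_i.
  exact: (implyP (i_min k) (ltn_ord_neq ki k_ne_i)).
Qed.

Lemma card_lrmin_and n (Q : pred 'S_n) (i : 'I_n) :
  (forall (x y : 'I_n) s, (x <= i)%N -> (y <= i)%N -> Q s -> Q (tperm x y * s)%g) ->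
  (#|[set s | Q s && lrmin s i]| * i.+1)%N = #|[set s | Q s]|.
Proof.
move=> Q_tperm; rewrite -(card_ord_le i).
rewrite -(@card_min_at _ [set k : 'I_n | (k <= i)%N] Q _ i); last by rewrite inE.
- by congr (_ * _)%N; apply: eq_card => s; rewrite !inE min_at_lrmin.
- by move=> x y s; rewrite !inE; apply: Q_tperm.
Qed.

Local Open Scope ring_scope.

Lemma sum_natr_pred (R : pzSemiRingType) (T : finType) (P : pred T) :
  \sum_x (P x)%:R = #|[set x | P x]|%:R :> R.
Proof. by rewrite card_sum_mem natr_sum; apply: eq_bigr => x _; rewrite inE. Qed.

Lemma sum_sqr_dev_pairwise_indep (R : comPzRingType) (T : finType) m
    (E : 'I_m -> pred T) (p : 'I_m -> R) :
  (forall i, \sum_x (E i x)%:R = #|T|%:R * p i) ->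
  (forall i j, i != j -> \sum_x (E i x && E j x)%:R = #|T|%:R * (p i * p j)) ->
  \sum_x (\sum_i (E i x)%:R - \sum_i p i) ^+ 2 = #|T|%:R * \sum_i p i * (1 - p i).
Proof.
move=> mean cov.
have cross i j : \sum_x ((E i x)%:R - p i) * ((E j x)%:R - p j)
    = if i == j then #|T|%:R * (p i * (1 - p i)) else 0.
  have expand x : ((E i x)%:R - p i) * ((E j x)%:R - p j) =
      (E i x && E j x)%:R - (E i x)%:R * p j - p i * (E j x)%:R + p i * p j.
    by case: (E i x); case: (E j x); rewrite /= ?mul0r ?mulr0 ?mul1r ?mulr1; ring.
  rewrite (eq_bigr _ (fun x _ => expand x)) !big_split /= !sumrN.
  rewrite -mulr_suml -mulr_sumr sumr_const mulr_natl !mean.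
  case: eqVneq => [<-|ij]; last by rewrite cov //; ring.
  under eq_bigr => x _ do rewrite andbb.
  by rewrite mean; ring.
under eq_bigr => x _ do rewrite -sumrB expr2 mulr_suml.
under eq_bigr => x _ do under eq_bigr => i _ do rewrite mulr_sumr.
rewrite exchange_big /= mulr_sumr; apply: eq_bigr => i _.
rewrite exchange_big /= (bigD1 i) //= cross eqxx big1 ?addr0 // => j /negPf ji.
by rewrite cross eq_sym ji.
Qed.

Section LeftToRightMinima.
Variables (R : realType) (n : nat).

Lemma sum_lrmin (i : 'I_n) : \sum_(s : 'S_n) (lrmin s i)%:R = #|'S_n|%:R * harmonic i :> R.
Proof.
have := @card_lrmin_and n predT i (fun _ _ _ _ _ _ => isT).
by rewrite sum_natr_pred /= -cardsT => <-; rewrite natrM mulfK.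
Qed.

Lemma lrmin_tperm (i j : 'I_n) (x y : 'I_n) (s : 'S_n) : (i < j)%N ->
  (x <= i)%N -> (y <= i)%N -> lrmin s j -> lrmin (tperm x y * s)%g j.
Proof.
move=> ij xi yi /forallP j_min; apply/forallP => k; apply/implyP => kj.
have txy_j : tperm x y j = j by apply/tpermD; apply/eqP => /(congr1 val) /=; lia.
rewrite !permM txy_j; apply: (implyP (j_min _)); case: tpermP => //; lia.
Qed.

Lemma sum_lrmin2 (i j : 'I_n) : i != j ->
  \sum_(s : 'S_n) (lrmin s i && lrmin s j)%:R = #|'S_n|%:R * (harmonic i * harmonic j) :> R.
Proof.
wlog ij : i j / (i < j)%N => [wlog_ij ne_ij | _].
  case: (ltngtP i j) => [ij | ji | e]; first exact: wlog_ij.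
  - under eq_bigr => s _ do rewrite andbC.
    by rewrite [harmonic i * _]mulrC wlog_ij // eq_sym.
  - by move: ne_ij; rewrite (val_inj e) eqxx.
have := @card_lrmin_and n (fun s : 'S_n => lrmin s j) i (fun x y s => @lrmin_tperm i j x y s ij).
have := @card_lrmin_and n predT j (fun _ _ _ _ _ _ => isT).
rewrite sum_natr_pred /= -cardsT => <- <-; rewrite !natrM.
rewrite (eq_card (B := [set s | lrmin s j & lrmin s i])); last by move=> s; rewrite !inE andbC.
by field; rewrite !nat1r !pnatr_eq0.
Qed.

Lemma sum_sqr_dev_lrmin_count :
  \sum_(s : 'S_n) ((lrmin_count s)%:R - series harmonic n) ^+ 2
    <= #|'S_n|%:R * series (@harmonic R) n.
Proof.
have -> : series harmonic n = \sum_(i < n) harmonic i :> R by rewrite /series /= big_mkord.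
under eq_bigr => s _ do rewrite /lrmin_count natr_sum.
rewrite (sum_sqr_dev_pairwise_indep (E := fun i s => lrmin s i) sum_lrmin sum_lrmin2).
rewrite ler_wpM2l // ler_sum // => i _.
by have := @harmonic_ge0 R i; set h := harmonic i; nra.
Qed.
End LeftToRightMinima.

Lemma sum_sqr_dev_greedy_steps (R : realType) n : (0 < n)%N ->
  \sum_(s : 'S_n) ((greedy_steps s)%:R + 2 - 2 * series harmonic n) ^+ 2
    <= 4 * (#|'S_n|%:R * series (@harmonic R) n).
Proof.
move=> n0; set H := series harmonic n.
pose dev (s : 'S_n) := ((lrmin_count s)%:R - H) ^+ 2.
have split_dev s : ((greedy_steps s)%:R + 2 - 2 * H) ^+ 2
    <= 2 * dev s + 2 * dev (rev_perm n * s)%g.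
  rewrite /dev -[X in _ + X - _]/(2%:R) -natrD greedy_steps_lrmin // natrD.
  set a := (lrmin_count s)%:R; set b := (lrmin_count _)%:R.
  by have := sqr_ge0 (a - b); nra.
have rev_sum : \sum_s dev (rev_perm n * s)%g = \sum_s dev s.
  by rewrite [RHS](reindex_inj (mulgI (rev_perm n))).
apply: le_trans (ler_sum _ (fun s _ => split_dev s)) _.
rewrite big_split /= -!mulr_sumr rev_sum.
by have := sum_sqr_dev_lrmin_count R n; rewrite -/H; lra.
Qed.

Lemma ln_sub_le (R : realType) (a b : R) : 0 < a -> 0 < b -> ln b - ln a <= (b - a) / a.
Proof.
move=> a0 b0; rewrite -ln_div ?posrE //.
have -> : b / a = 1 + (b - a) / a by field; rewrite gt_eqF.
by apply: le_ln1Dx; rewrite mulrBl divff ?gt_eqF // ltrBrDr addNr divr_gt0.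
Qed.

Lemma ln_succ_sub_bounds (R : realType) m :
  (m.+2%:R : R)^-1 <= ln m.+2%:R - ln m.+1%:R <= (m.+1%:R : R)^-1.
Proof.
have pos k : 0 < k.+1%:R :> R by rewrite ltr0n.
have step : m.+2%:R - m.+1%:R = 1 :> R by rewrite -natr1 addrAC subrr add0r.
apply/andP; split; last by rewrite (le_trans (ln_sub_le _ _)) // step mul1r.
by rewrite -opprB lerNr (le_trans (ln_sub_le _ _)) // -opprB step mulNr mul1r.
Qed.

Lemma ln_le_series_harmonic (R : realType) n : ln (n.+1%:R : R) <= series harmonic n.
Proof.
elim: n => [|n IH]; first by rewrite ln1 /series /= big_geq.
have /andP [_ step] := @ln_succ_sub_bounds R n.
by rewrite seriesSr -(subrK (ln n.+1%:R) (ln n.+2%:R)) addrC lerD.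
Qed.

Lemma series_harmonic_le_ln (R : realType) n : series (@harmonic R) n.+1 <= 1 + ln n.+1%:R.
Proof.
elim: n => [|n IH]; first by rewrite seriesSr /series /= big_geq // ln1 invr1 add0r addr0.
have /andP [step _] := @ln_succ_sub_bounds R n.
by rewrite seriesSr -(subrK (ln n.+1%:R) (ln n.+2%:R)) [_ + ln _]addrC addrA lerD.
Qed.

Lemma series_harmonic_ln_bounds (R : realType) n : (0 < n)%N ->
  ln (n%:R : R) <= series harmonic n <= 1 + ln (n%:R : R).
Proof.
case: n => [//|m] _; rewrite series_harmonic_le_ln andbT.
apply: le_trans (ln_le_series_harmonic R m.+1).
by rewrite ler_ln ?posrE ?ltr0n // ler_nat.
Qed.

Lemma markov_card (R : numDomainType) (T : finType) (f : T -> R) (A : {pred T}) c :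
  (forall x, 0 <= f x) -> (forall x, x \in A -> c <= f x) -> #|A|%:R * c <= \sum_x f x.
Proof.
move=> f_ge0 f_ge_c; rewrite mulr_natl -sumr_const big_mkcond /=.
by apply: ler_sum => x _; case: ifP => [/f_ge_c|].
Qed.

Lemma prob_window_le1 (R : realType) (eps : R) n : prob_window eps n <= 1.
Proof.
rewrite /prob_window ler_pdivrMr ?mul1r ?ler_nat ?subset_leq_card ?subsetT //.
by rewrite ltr0n cardsT card_Sn fact_gt0.
Qed.

Lemma one_sub_prob_window_le (R : realType) (eps : R) n : (0 < n)%N ->
  1 <= ln (n%:R : R) -> 4 <= eps * ln (n%:R : R) ->
  1 - prob_window eps n <= 32 / (eps ^+ 2 * ln (n%:R : R)).
Proof.
move=> n0 l_ge1 epsl_ge4; rewrite /prob_window.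
have /andP [l_le_H H_le_l] := series_harmonic_ln_bounds R n0.
set l := ln (n%:R : R) in l_ge1 epsl_ge4 l_le_H H_le_l *.
set H := series (@harmonic R) n in l_le_H H_le_l *.
set G := [set s : 'S_n | _]; set N : R := #|[set: 'S_n]|%:R.
have N_gt0 : 0 < N by rewrite ltr0n cardsT card_Sn fact_gt0.
have eps_gt0 : 0 < eps by nra.
set t := eps * l - 2; have t_gt0 : 0 < t by rewrite /t; lra.
pose dev (s : 'S_n) := (greedy_steps s)%:R + 2 - 2 * H.
have far s : s \in ~: G -> t ^+ 2 <= dev s ^+ 2.
  rewrite !inE negb_and -!ltNge => out_s.
  have : dev s < - t \/ t < dev s.
    by rewrite /dev /t; case/orP: out_s => ?; [left|right]; lra.
  by case=> ?; nra.
(* Chebyshev, with second moment at most 4 N H <= 8 N l. *)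
have bad_le : #|~: G|%:R * t ^+ 2 <= 8 * (N * l).
  apply: le_trans (markov_card (fun s => sqr_ge0 (dev s)) far) _.
  apply: le_trans (sum_sqr_dev_greedy_steps R n0) _; rewrite -cardsT -/N -/H.
  by nra.
have -> : 1 - #|G|%:R / N = #|~: G|%:R / N.
  have N_split : N = #|G|%:R + #|~: G|%:R by rewrite /N -natrD cardsC cardsT.
  by rewrite -{1}(divff (lt0r_neq0 N_gt0)) -mulrBl {1}N_split addrAC subrr add0r.
have e2l_gt0 : 0 < eps ^+ 2 * l by rewrite mulr_gt0 ?exprn_gt0 //; lra.
rewrite ler_pdivrMr // mulrAC ler_pdivlMr //.
have epsl_le : (eps * l) ^+ 2 <= 4 * t ^+ 2 by rewrite /t; nra.
have B_ge0 : 0 <= #|~: G|%:R :> R by [].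
rewrite -(ler_pM2r (_ : 0 < l)); last lra.
by rewrite exprMn in epsl_le; nra.
Qed.

Local Open Scope classical_set_scope.

Lemma near_ln_natr_ge (R : realType) (K : R) : \forall n \near \oo, K <= ln (n%:R : R).
Proof.
apply: filterS (nbhs_infty_ger (expR K)) => n expK_le.
by rewrite -[K]expRK ler_ln ?posrE // (lt_le_trans (expR_gt0 K)).
Qed.

Unset Implicit Arguments.
Theorem corollary2 (R : realType) (eps : R) (heps : 0 < eps) :
  prob_window eps n @[n --> \oo] --> (1 : R).
Proof.
apply/cvgrPdist_lt => d d_gt0; near=> n.
have l_ge1 : 1 <= ln (n%:R : R) by near: n; exact: near_ln_natr_ge.
have l_ge : 4 / eps <= ln (n%:R : R) by near: n; exact: near_ln_natr_ge.
have l_gt : 32 / (eps ^+ 2 * d) + 1 <= ln (n%:R : R) by near: n; exact: near_ln_natr_ge.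
have n_gt0 : (0 < n)%N.
  by move: l_ge1; case: (posnP n) => [->|//]; rewrite mulr0n ln0; lra.
set l := ln _ in l_ge1 l_ge l_gt *.
have e2_gt0 : 0 < eps ^+ 2 by rewrite exprn_gt0.
have epsl_ge4 : 4 <= eps * l by rewrite mulrC -ler_pdivrMr.
have small : 32 / (eps ^+ 2 * l) < d.
  have : 32 / (eps ^+ 2 * d) < l by lra.
  rewrite !ltr_pdivrMr ?mulr_gt0 //; last lra.
  by have -> : d * (eps ^+ 2 * l) = l * (eps ^+ 2 * d) by ring.
rewrite ger0_norm ?subr_ge0 ?prob_window_le1 //.
by have := one_sub_prob_window_le n_gt0 l_ge1 epsl_ge4; lra.
Unshelve. all: end_near.
Qed.
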